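(* No randomized strategyproof mechanism for locating an obnoxious facility on $[0,1]$ has an approximation ratio better than $\sqrt{6/5}$ for the geometric mean of utilities.
   Context: Agents $i=1,\dots,n$ have private locations $x_i\in[0,1]$. A randomized mechanism $f$ maps each reported profile to a distribution over $[0,1]$; agent $i$'s utility from distribution $\pi$ is $\mathbb E_{y\sim\pi}|x_i-y|$, and $f$ is strategyproof if no agent can increase this expected utility by misreporting. The objective of $y$ is the geometric mean $\big(\prod_i|x_i-y|\big)^{1/n}$, and the mechanism's value is its expectation under $f(\mathbf x)$. The approximation ratio is the supremum over all numbers of agents and profiles of (optimal objective over deterministic $z\in[0,1]$)/(mechanism's value). *)

From HB Require Import structures.
From mathcomp Require Import all_boot all_order all_algebra.
From mathcomp Require Import all_classical all_reals all_analysis.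
Set Implicit Arguments. Unset Strict Implicit. Unset Printing Implicit Defensive.
Import Order.TTheory GRing.Theory Num.Theory.
Local Open Scope classical_set_scope.
Local Open Scope ring_scope.

Definition profile (R : realType) (n : nat) := 'I_n -> R.

Definition valid_profile (R : realType) n (x : profile R n) : Prop :=
  forall i, 0 <= x i <= 1.

Definition mechanism (R : realType) :=
  forall n : nat, profile R n -> probability R R.

Definition mech_on_unit (R : realType) (f : mechanism R) : Prop :=
  forall n (x : profile R n), valid_profile x ->
    f n x `[0%R, 1%R]%classic = 1%E.

Definition exp_util (R : realType) (pi : probability R R) (t : R) : \bar R :=
  (\int[pi]_(y in `[0%R, 1%R]%classic) (`|t - y|)%:E)%E.

Definition upd (R : realType) n (x : profile R n) (i : 'I_n) (v : R) : profile R n :=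
  fun j => if j == i then v else x j.

Definition strategyproof (R : realType) (f : mechanism R) : Prop :=
  forall n (x : profile R n) (i : 'I_n) (v : R),
    valid_profile x -> 0 <= v <= 1 ->
    (exp_util (f n (upd x i v)) (x i) <= exp_util (f n x) (x i))%E.

Definition geo_mean (R : realType) n (x : profile R n) (y : R) : R :=
  (\prod_(i < n) `|x i - y|) `^ (n%:R^-1).

Definition mech_value (R : realType) (f : mechanism R) n (x : profile R n) : \bar R :=
  (\int[f n x]_(y in `[0%R, 1%R]%classic) (geo_mean x y)%:E)%E.

(* Since the optimum is attained and is
   positive, this is equivalent to sup OPT/value <= rho. *)
Definition approx_at_most (R : realType) (f : mechanism R) (rho : R) : Prop :=
  forall n (x : profile R n), (0 < n)%N -> valid_profile x ->
    forall z : R, 0 <= z <= 1 ->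
      ((geo_mean x z)%:E <= rho%:E * mech_value f x)%E.

From mathcomp Require Import all_boot all_order all_algebra.
From mathcomp Require Import all_classical all_reals all_analysis.
From mathcomp Require Import lra measurable_realfun.
Import Order.TTheory GRing.Theory Num.Theory.
Local Open Scope ring_scope.

(* Compare the truthful profile (1/4, 3/4) with the deviations (0, 3/4) and
   (1/4, 1).  On (0, 3/4) the geometric mean at y is sqrt (y |3/4 - y|), which
   is at most 9/25 + 19/100 |1/4 - y|, an affine function of the utility of the
   deviating agent, whose true location is 1/4; symmetrically on (1/4, 1).  By
   strategyproofness those utilities are at most the utilities u1, u2 of the
   two agents on (1/4, 3/4), and u1 + u2 <= 1 because |1/4 - y| + |3/4 - y| <= 1
   on [0, 1].  Hence the two values of the mechanism add up to at most
   2 * 9/25 + 19/100 = 91/100, while each optimum is at least 1/2 (at the far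
   endpoint), so rho >= 100/91 > sqrt (6/5). *)

Lemma sqrtr_le_sqr (R : rcfType) (a b : R) : 0 <= b -> a <= b ^+ 2 -> Num.sqrt a <= b.
Proof.
by move=> b0 ab; rewrite -(ger0_norm b0) -sqrtr_sqr ler_sqrt // sqr_ge0.
Qed.

Lemma sqrt_mul_dist_le (R : rcfType) (y : R) : 0 <= y <= 1 ->
  Num.sqrt (y * `|3/4 - y|) <= 9/25 + 19/100 * `|1/4 - y|.
Proof.
move=> /andP[y0 y1].
apply: sqrtr_le_sqr; first by apply: addr_ge0 => //; apply: mulr_ge0.
have [y_le|y_gt] := leP y (1/4).
  have -> : `|3/4 - y| = 3/4 - y by apply: ger0_norm; lra.
  have -> : `|1/4 - y| = 1/4 - y by apply: ger0_norm; lra.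
  have : 0 <= (1/4 - y) * y by apply: mulr_ge0; lra.
  nra.
have [y_le'|y_gt'] := leP y (3/4).
  have -> : `|3/4 - y| = 3/4 - y by apply: ger0_norm; lra.
  have -> : `|1/4 - y| = - (1/4 - y) by apply: ltr0_norm; lra.
  (* the gap is a quadratic in y, positive but nearly tangent at y = 61/200 *)
  have := sqr_ge0 (y - 61/200).
  nra.
have -> : `|3/4 - y| = - (3/4 - y) by apply: ltr0_norm; lra.
have -> : `|1/4 - y| = - (1/4 - y) by apply: ltr0_norm; lra.
have : 0 <= (y - 3/4) * (1 - y) by apply: mulr_ge0; lra.
nra.
Qed.

Lemma sqrt_quarter (R : rcfType) : Num.sqrt (1/4 : R) = 1/2.
Proof.
have -> : (1/4 : R) = (1/2) ^+ 2 by rewrite expr2; lra.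
by rewrite sqrtr_sqr ger0_norm //; lra.
Qed.

Lemma dist_quarters_le1 (R : realFieldType) (y : R) : 0 <= y <= 1 ->
  `|1/4 - y| + `|3/4 - y| <= 1.
Proof.
move=> /andP[y0 y1].
have [y_le|y_gt] := leP y (1/4).
  by rewrite !ger0_norm; lra.
have [y_le'|y_gt'] := leP y (3/4).
  by rewrite ltr0_norm ?ger0_norm; lra.
by rewrite !ltr0_norm; lra.
Qed.

Definition pair_profile {R : realType} (a b : R) : profile R 2 :=
  fun j => if j == ord0 then a else b.

Section pair_profile.
Context {R : realType}.
Implicit Types a b v y : R.

Lemma valid_pair_profile a b :
  0 <= a <= 1 -> 0 <= b <= 1 -> valid_profile (pair_profile a b).
Proof. by move=> a01 b01 j; rewrite /pair_profile; case: ifP. Qed.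

Lemma upd_pair_profile0 a b v : upd (pair_profile a b) ord0 v = pair_profile v b.
Proof. by apply: funext => j; rewrite /upd /pair_profile; case: eqP. Qed.

Lemma upd_pair_profile1 a b v : upd (pair_profile a b) ord_max v = pair_profile a v.
Proof. by apply: funext => -[[|[|]]]. Qed.

Lemma geo_mean_pair a b y :
  geo_mean (pair_profile a b) y = Num.sqrt (`|a - y| * `|b - y|).
Proof.
by rewrite /geo_mean !big_ord_recr big_ord0 /= mul1r powR12_sqrt ?mulr_ge0.
Qed.

Lemma geo_mean_left_dev_le y : 0 <= y <= 1 ->
  geo_mean (pair_profile 0 (3/4)) y <= 9/25 + 19/100 * `|1/4 - y|.
Proof.
move=> y01; rewrite geo_mean_pair sub0r normrN ger0_norm.
  exact: sqrt_mul_dist_le.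
by case/andP: y01.
Qed.

Lemma geo_mean_right_dev_le y : 0 <= y <= 1 ->
  geo_mean (pair_profile (1/4) 1) y <= 9/25 + 19/100 * `|3/4 - y|.
Proof.
move=> /andP[y0 y1].
have y'01 : 0 <= 1 - y <= 1 by apply/andP; split; lra.
rewrite geo_mean_pair.
have -> : `|1/4 - y| * `|1 - y| = (1 - y) * `|3/4 - (1 - y)|.
  rewrite mulrC ger0_norm ?subr_ge0 // distrC.
  by congr (_ * `|_|); lra.
have -> : `|3/4 - y| = `|1/4 - (1 - y)|.
  by rewrite distrC; congr `|_|; lra.
exact: sqrt_mul_dist_le.
Qed.

End pair_profile.

Lemma measurable_dist (R : realType) (D : set R) (t : R) :
  measurable_fun D (fun y => `|t - y|).
Proof.
exact: measurableT_comp (@normr_measurable R setT)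
  (measurable_funB (measurable_cst t) (@measurable_id _ _ D)).
Qed.

Lemma measurable_geo_mean (R : realType) (D : set R) n (x : profile R n) :
  measurable_fun D (geo_mean x).
Proof.
have prod_dist : measurable_fun D (fun y => \prod_(i < n) `|x i - y|).
  by apply: measurable_prod => i _; exact: measurable_dist.
exact: measurableT_comp (measurable_powR _) prod_dist.
Qed.

Section integral_bounds.
Context {R : realType} {mu : probability R R} {D : set R}.
Hypotheses (mD : measurable D) (muD : mu D = 1%E).
Local Open Scope ereal_scope.

Lemma integral_le_affine (g h : R -> R) (a b : R) : (0 <= a)%R -> (0 <= b)%R ->
  measurable_fun D g -> measurable_fun D h ->
  (forall y, D y -> 0 <= g y <= a + b * h y)%R -> (forall y, D y -> 0 <= h y)%R ->
  \int[mu]_(y in D) (g y)%:E <= a%:E + b%:E * \int[mu]_(y in D) (h y)%:E.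
Proof.
move=> a0 b0 mg mh g_le h0.
have mbh : measurable_fun D (fun y => b%:E * (h y)%:E).
  by apply/measurable_EFinP; exact: measurable_funM (measurable_cst b) mh.
have h0E y : D y -> 0 <= (h y)%:E by move/h0; rewrite lee_fin.
rewrite -(ge0_integralZl_EFin _ mD h0E ((measurable_EFinP D h).2 mh)) //.
rewrite -[a%:E]mule1 -muD -integral_cst //.
have bh0 y : D y -> 0 <= b%:E * (h y)%:E by move=> Dy; rewrite mule_ge0 ?h0E.
have a0E y : D y -> 0 <= cst a%:E y by rewrite lee_fin.
rewrite -(ge0_integralD _ mD a0E (measurable_cst _) bh0 mbh).
apply: ge0_le_integral => //.
- by move=> y /g_le /andP[g0 _]; rewrite lee_fin.
- exact/measurable_EFinP.
- exact: emeasurable_funD (measurable_cst _) mbh.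
- by move=> y /g_le /andP[_ g_le']; rewrite /= -EFinM -EFinD lee_fin.
Qed.

Lemma integral_le_cst (g : R -> R) (c : R) : (0 <= c)%R -> measurable_fun D g ->
  (forall y, D y -> 0 <= g y <= c)%R -> \int[mu]_(y in D) (g y)%:E <= c%:E.
Proof.
move=> c0 mg g_le.
rewrite -[c%:E]adde0 -[X in _ + X](mul0e (\int[mu]_(y in D) (cst 0%R y)%:E)).
apply: integral_le_affine => // y /g_le.
by rewrite mul0r addr0.
Qed.

End integral_bounds.

Lemma ratio_lower_bound {R : realFieldType} {v1 v2 : \bar R} {m1 m2 rho c : R} :
  0 < m1 -> (0 <= v1)%E -> (0 <= v2)%E -> (v1 + v2 <= c%:E)%E ->
  (m1%:E <= rho%:E * v1)%E -> (m2%:E <= rho%:E * v2)%E -> m1 + m2 <= rho * c.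
Proof.
move=> m1_gt0; case: v1 => [r1| |]; case: v2 => [r2| |] //.
rewrite -EFinD -!EFinM !lee_fin => r1_ge0 r2_ge0 r12_le m1_le m2_le.
have [rho_le0|rho_gt0] := leP rho 0.
  by have := mulr_le0_ge0 rho_le0 r1_ge0; lra.
nra.
Qed.

Lemma mech_value_ge0 {R : realType} (f : mechanism R) {n} (x : profile R n) :
  (0 <= mech_value f x)%E.
Proof. by apply: integral_ge0 => y _; rewrite lee_fin powR_ge0. Qed.

Lemma exp_util_ge0 (R : realType) (pi : probability R R) (t : R) :
  (0 <= exp_util pi t)%E.
Proof. by apply: integral_ge0 => y _; rewrite lee_fin. Qed.

Section mechanism_bounds.
Context {R : realType} {f : mechanism R}.
Hypotheses (f_unit : mech_on_unit f) (f_sp : strategyproof f).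
Local Notation I01 := (`[0%R, 1%R]%classic : set R).
Local Notation truthful := (pair_profile (1/4 : R) (3/4)).
Local Notation left_dev := (pair_profile (0 : R) (3/4)).
Local Notation right_dev := (pair_profile (1/4 : R) 1).
Local Open Scope ereal_scope.

Let mem_I01 y : I01 y -> (0 <= y <= 1)%R.
Proof. by rewrite /= in_itv. Qed.

Let valid_upd n (x : profile R n) i v :
  valid_profile x -> (0 <= v <= 1)%R -> valid_profile (upd x i v).
Proof. by move=> x01 v01 j; rewrite /upd; case: ifP. Qed.

Lemma mech_value_upd_le {n} {x : profile R n} (i : 'I_n) {v a b : R} :
  valid_profile x -> (0 <= v <= 1)%R -> (0 <= a)%R -> (0 <= b)%R ->
  (forall y, 0 <= y <= 1 -> geo_mean (upd x i v) y <= a + b * `|x i - y|)%R ->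
  mech_value f (upd x i v) <= a%:E + b%:E * exp_util (f n x) (x i).
Proof.
move=> x01 v01 a0 b0 geo_le.
have upd01 : valid_profile (upd x i v) by exact: valid_upd.
have value_le : mech_value f (upd x i v) <=
    a%:E + b%:E * exp_util (f n (upd x i v)) (x i).
  apply: (integral_le_affine (measurable_itv _) (f_unit _ _ upd01)) => //.
  - exact: measurable_geo_mean.
  - exact: measurable_dist.
  - by move=> y /mem_I01 /geo_le ->; rewrite powR_ge0.
apply: le_trans value_le _; apply: leeD2l; apply: lee_wpmul2l (f_sp n x i v x01 v01).
by rewrite lee_fin.
Qed.

Let unit0 : (0 <= (0 : R) <= 1)%R. Proof. by rewrite lexx ler01. Qed.
Let unit1 : (0 <= (1 : R) <= 1)%R. Proof. by rewrite lexx ler01. Qed.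

Let valid_truthful : valid_profile truthful.
Proof. by apply: valid_pair_profile; apply/andP; split; lra. Qed.

Lemma exp_util_quarters_le1 :
  exp_util (f 2%N truthful) (1/4) + exp_util (f 2%N truthful) (3/4) <= 1.
Proof.
have mI01 : measurable I01 by exact: measurable_itv.
have dist_ge0E (t y : R) : I01 y -> 0 <= (`|t - y|)%:E by rewrite lee_fin.
have mdistE t : measurable_fun I01 (fun y => (`|t - y|)%:E).
  by apply/measurable_EFinP; exact: measurable_dist.
rewrite /exp_util -(ge0_integralD _ mI01 (dist_ge0E _) (mdistE _) (dist_ge0E _) (mdistE _)).
under eq_integral do rewrite -EFinD.
apply: integral_le_cst => //.
- exact: f_unit.
- by apply: measurable_funD; exact: measurable_dist.
- by move=> y /mem_I01 y01; rewrite addr_ge0 //= dist_quarters_le1.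
Qed.

Lemma mech_value_deviations_le :
  mech_value f left_dev + mech_value f right_dev <= (91/100)%:E.
Proof.
have a0 : (0 <= 9/25 :> R)%R by lra.
have b0 : (0 <= 19/100 :> R)%R by lra.
have := mech_value_upd_le ord0 valid_truthful unit0 a0 b0.
rewrite upd_pair_profile0 /= => /(_ geo_mean_left_dev_le) left_le.
have := mech_value_upd_le ord_max valid_truthful unit1 a0 b0.
rewrite upd_pair_profile1 /= => /(_ geo_mean_right_dev_le) right_le.
apply: le_trans (leeD left_le right_le) _.
rewrite addeACA -ge0_muleDr ?exp_util_ge0 //.
apply: le_trans (leeD2l _ (lee_wpmul2l _ exp_util_quarters_le1)) _.
  by rewrite lee_fin.
by rewrite mule1 -!EFinD lee_fin; lra.
Qed.

Lemma approx_left_dev {rho : R} : approx_at_most f rho ->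
  (1/2)%:E <= rho%:E * mech_value f left_dev.
Proof.
move=> approx.
have valid_dev : valid_profile left_dev.
  by apply: valid_pair_profile; apply/andP; split; lra.
have := approx 2%N left_dev isT valid_dev 1%R unit1.
rewrite geo_mean_pair.
have -> : (`|0 - 1| * `|3/4 - 1| = 1/4 :> R)%R.
  by rewrite !ler0_norm; lra.
by rewrite sqrt_quarter.
Qed.

Lemma approx_right_dev {rho : R} : approx_at_most f rho ->
  (1/2)%:E <= rho%:E * mech_value f right_dev.
Proof.
move=> approx.
have valid_dev : valid_profile right_dev.
  by apply: valid_pair_profile; apply/andP; split; lra.
have := approx 2%N right_dev isT valid_dev 0%R unit0.
rewrite geo_mean_pair.
have -> : (`|1/4 - 0| * `|1 - 0| = 1/4 :> R)%R.
  by rewrite !ger0_norm; lra.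
by rewrite sqrt_quarter.
Qed.

End mechanism_bounds.

Theorem theorem9 (R : realType) (f : mechanism R) :
  mech_on_unit f -> strategyproof f ->
  forall rho : R, approx_at_most f rho -> Num.sqrt (6 / 5) <= rho.
Proof.
move=> f_unit f_sp rho approx.
have : 1/2 + 1/2 <= rho * (91/100).
  apply: (ratio_lower_bound _ (mech_value_ge0 f _) (mech_value_ge0 f _)
    (mech_value_deviations_le f_unit f_sp) (approx_left_dev approx) (approx_right_dev approx)).
  lra.
move=> rho_ge; apply: sqrtr_le_sqr; nra.
Qed.
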